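(* Let $G$ be a bipartite graph with colour classes $V$ and $W$, where $\#V=v$ and $\#W=w$, and let $e$ be the number of edges of $G$. Suppose $G$ contains no cycle of length $4$ and no cycle of length $6$. Then: (i) $e^3-(v+w)e^2+2vwe-v^2w^2\le 0$; (ii) if moreover $v\ge\lfloor w^2/4\rfloor$, then $e\le v+\lfloor w^2/4\rfloor$. *)

(* A bipartite graph with colour classes V and W is given by
   finite types V, W and an edge relation E : V -> W -> bool (edges only go
   between the two classes; the graph is simple). *)
From mathcomp Require Import all_boot all_order all_algebra.
Set Implicit Arguments. Unset Strict Implicit. Unset Printing Implicit Defensive.

Definition nedges (V W : finType) (E : V -> W -> bool) : nat :=
  #|[set p : V * W | E p.1 p.2]|.

Definition has_C4 (V W : finType) (E : V -> W -> bool) : Prop :=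
  exists (v1 v2 : V) (w1 w2 : W),
    [/\ v1 != v2, w1 != w2 &
        [&& E v1 w1, E v2 w1, E v2 w2 & E v1 w2]].

Definition has_C6 (V W : finType) (E : V -> W -> bool) : Prop :=
  exists (v1 v2 v3 : V) (w1 w2 w3 : W),
    [/\ uniq [:: v1; v2; v3], uniq [:: w1; w2; w3] &
        [&& E v1 w1, E v2 w1, E v2 w2, E v3 w2, E v3 w3 & E v1 w3]].

From mathcomp Require Import Rstruct.
From mathcomp Require Import classical_sets reals topology normedtype sequences derive exp.
From mathcomp Require Import all_boot all_order all_algebra.
From mathcomp Require Import zify ring lra.
Set Implicit Arguments. Unset Strict Implicit. Unset Printing Implicit Defensive.
Import Order.TTheory GRing.Theory Num.Theory numFieldNormedType.Exports.

(* (ii): choose for every x in V a neighbour p(x) and join p(x) to every other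
   neighbour of x.  Without C4 this graph on W receives each edge from a single x,
   and without C4 and C6 it is triangle-free, so Mantel's theorem gives
   sum_x (deg x - 1) <= w^2/4, whence e <= v + w^2/4.

   (i): deleting a vertex of degree at most 1 preserves the inequality (a
   polynomial computation), so we may assume that all degrees are at least 2.
   A pair (x, y) in V x W is joined by at most one path of length 3, and by
   none if x y is an edge; counting these paths through their middle edge gives
   e + sum_(xy edge) (deg x - 1) (deg y - 1) <= v w.  By the AM-GM inequality and
   the convexity of t |-> t ln (t - 1), the sum is at least
   e (e / v - 1) (e / w - 1), and (i) follows. *)

Lemma card_pairs (A B : finType) (R : A -> B -> bool) :
  #|[set p : A * B | R p.1 p.2]| = \sum_a #|[set b | R a b]|.
Proof.
rewrite -sum1dep_card; under [RHS]eq_bigr => a _ do rewrite -sum1dep_card.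
by rewrite pair_big_dep.
Qed.

Lemma sum_card_exchange (A B : finType) (R : A -> B -> bool) :
  \sum_a #|[set b | R a b]| = \sum_b #|[set a | R a b]|.
Proof.
under eq_bigr => a _ do rewrite -sum1dep_card.
under [RHS]eq_bigr => b _ do rewrite -sum1dep_card.
exact: (exchange_big_dep xpredT).
Qed.

Lemma sqr_sum_le (I : finType) (a : I -> nat) :
  (\sum_i a i) ^ 2 <= #|I| * \sum_i a i ^ 2.
Proof.
rewrite -(leq_pmul2l (isT : 0 < 2)) expnS expn1 big_distrlr /=.
apply: (@leq_trans (\sum_i \sum_j (a i ^ 2 + a j ^ 2))).
  rewrite big_distrr; apply: leq_sum => i _; rewrite big_distrr; apply: leq_sum => j _.
  exact: nat_Cauchy.
under eq_bigr => i _ do rewrite big_split /=.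
rewrite big_split /= [X in _ + X]exchange_big /= mul2n -addnn.
by under eq_bigr do rewrite sum_nat_cond_const; rewrite -big_distrr cardsT.
Qed.

Section Mantel.
Variables (T : finType) (h : rel T).
Hypothesis h_sym : symmetric h.
Hypothesis h_triangle_free : forall x y z, h x y -> h x z -> h y z -> False.

Let deg x := #|[set y | h x y]|.

Lemma adjacent_deg_le x y : h x y -> deg x + deg y <= #|T|.
Proof.
move=> hxy; rewrite -cardsUI.
suff -> : [set z | h x z] :&: [set z | h y z] = set0 by rewrite cards0 addn0 max_card.
apply/setP => z; rewrite !inE; apply/negbTE/andP => -[hxz hyz].
exact: (h_triangle_free hxy hxz hyz).
Qed.

Lemma mantel : 2 * \sum_x #|[set y | h x y]| <= #|T| ^ 2.
Proof.
set S := \sum_x deg x; set Q := \sum_x deg x ^ 2.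
have sum_deg_l : \sum_x \sum_(y | h x y) deg x = Q.
  by apply: eq_bigr => x _; rewrite sum_nat_cond_const.
have sum_deg_r : \sum_x \sum_(y | h x y) deg y = Q.
  rewrite (exchange_big_dep xpredT) //=; apply: eq_bigr => y _.
  by under eq_bigl => x do rewrite h_sym; rewrite sum_nat_cond_const.
have twoQ : 2 * Q <= #|T| * S.
  rewrite mul2n -addnn -{1}sum_deg_l -sum_deg_r -big_split /= /S big_distrr /=.
  apply: leq_sum => x _; rewrite -big_split /= mulnC -sum_nat_cond_const.
  by apply: leq_sum => y; apply: adjacent_deg_le.
have [->|S_gt0] := posnP S; first by rewrite muln0.
rewrite -(leq_pmul2r S_gt0); apply: (@leq_trans (2 * (#|T| * Q))).
  by rewrite -mulnA mulnn leq_mul2l sqr_sum_le.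
by rewrite mulnCA -mulnn -mulnA leq_mul2l twoQ orbT.
Qed.

End Mantel.

Section C4Free.
Variables (V W : finType) (E : V -> W -> bool).
Hypothesis nC4 : ~ has_C4 E.

Lemma C4_free_eqV (p q : V) (s t : W) :
  s != t -> E p s -> E q s -> E p t -> E q t -> p = q.
Proof.
move=> st ps qs pt qt; apply/eqP/negPn/negP => pq.
by case: nC4; exists p, q, s, t; split; rewrite ?ps ?qs ?qt ?pt.
Qed.

Lemma C4_free_eqW (p q : V) (s t : W) :
  p != q -> E p s -> E q s -> E p t -> E q t -> s = t.
Proof.
move=> pq ps qs pt qt; apply/eqP/negPn/negP => st.
by case: nC4; exists p, q, s, t; split; rewrite ?ps ?qs ?qt ?pt.
Qed.

End C4Free.

Section FanGraph.
Variables (V W : finType) (E : V -> W -> bool).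
Hypotheses (nC4 : ~ has_C4 E) (nC6 : ~ has_C6 E).

Definition pivot x : option W := [pick y | E x y].

Definition fan x y z :=
  [&& E x y, E x z, y != z & (pivot x == Some y) || (pivot x == Some z)].

Definition fan_graph : rel W := fun y z => [exists x, fan x y z].

Lemma fan_sym x y z : fan x y z = fan x z y.
Proof. by rewrite /fan andbCA eq_sym orbC. Qed.

Lemma fan_graph_sym : symmetric fan_graph.
Proof. by move=> y z; apply: eq_existsb => x; rewrite fan_sym. Qed.

Lemma fan_unique x x' y z : fan x y z -> fan x' y z -> x = x'.
Proof.
move=> /and4P[xy xz yz _] /and4P[x'y x'z _ _].
exact: (C4_free_eqV nC4 yz).
Qed.

Lemma fan_graph_triangle_free y z u :
  fan_graph y z -> fan_graph y u -> fan_graph z u -> False.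
Proof.
move=> /existsP[x1 f1] /existsP[x2 f2] /existsP[x3 f3].
have no_pivot x : fan x y z -> fan x y u -> fan x z u -> False.
  rewrite /fan => /and4P[_ _ yz +] /and4P[_ _ yu +] /and4P[_ _ zu +].
  case: (pivot x) => // c; rewrite !(inj_eq (@Some_inj _)).
  case: (eqVneq c y) => [-> _ _ /=|_ /= /eqP cz /eqP cu _].
    by rewrite (negbTE yz) (negbTE yu).
  by rewrite -cz -cu eqxx in zu.
case/and4P: (f1) => x1y x1z yz _; case/and4P: (f2) => x2y x2u yu _.
case/and4P: (f3) => x3z x3u zu _.
have [e12|n12] := eqVneq x1 x2.
  subst x2; have e13 := C4_free_eqV nC4 zu x1z x3z x2u x3u.
  by subst x3; apply: no_pivot f3.
have [e13|n13] := eqVneq x1 x3.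
  by subst x3; case/eqP: n12; apply: (C4_free_eqV nC4 yu).
have [e23|n23] := eqVneq x2 x3.
  by subst x3; case/eqP: n12; apply: (C4_free_eqV nC4 yz).
apply: nC6; exists x1, x3, x2, z, u, y; split; rewrite /= ?inE ?negb_or.
- by rewrite n13 n12 eq_sym n23.
- by rewrite zu !(eq_sym _ y) yz yu.
- by rewrite x1z x3z x3u x2u x2y x1y.
Qed.

Lemma card_fan x : #|[set p : W * W | fan x p.1 p.2]| = 2 * #|[set y | E x y]|.-1.
Proof.
rewrite /fan /pivot; case: pickP => [c xc | noN]; last first.
  rewrite (_ : [set y | E x y] = set0) ?cards0; last by apply/setP => y; rewrite !inE noN.
  by apply: eq_card0 => -[y z]; rewrite !inE noN.
set M := [set y | E x y] :\ c.
have -> : [set p : W * W | [&& E x p.1, E x p.2, p.1 != p.2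
            & (Some c == Some p.1) || (Some c == Some p.2)]] = setX [set c] M :|: setX M [set c].
  apply/setP => -[y z]; rewrite !inE /= !(inj_eq (@Some_inj _)).
  case: (eqVneq y c) => [->|yc]; case: (eqVneq z c) => [->|zc] //=;
    by rewrite ?xc ?yc ?zc ?andbT ?andbF ?orbF.
have disj : setX [set c] M :&: setX M [set c] = set0.
  by apply/setP => -[y z]; rewrite !inE /=; case: eqP => // ->; rewrite andbF.
rewrite cardsU disj cards0 subn0 !cardsX cards1 mul1n muln1 addnn -mul2n.
by rewrite [in RHS](cardsD1 c) inE xc.
Qed.

Lemma sum_card_fan_le :
  \sum_x #|[set p : W * W | fan x p.1 p.2]| <= #|[set p : W * W | fan_graph p.1 p.2]|.
Proof.
rewrite (sum_card_exchange (fun x (p : W * W) => fan x p.1 p.2)) -sum1dep_card.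
rewrite (bigID (fun p : W * W => fan_graph p.1 p.2)) /= [X in _ + X]big1 ?addn0.
  apply: leq_sum => p _; apply/card_le1_eqP => x x'; rewrite !inE => f f'.
  exact: fan_unique f' f.
move=> p /negP nfan; apply: eq_card0 => x; rewrite !inE.
by apply/negP => f; apply: nfan; apply/existsP; exists x.
Qed.

Lemma sum_deg_pred_le : 4 * \sum_x #|[set y | E x y]|.-1 <= #|W| ^ 2.
Proof.
apply: leq_trans (mantel fan_graph_sym fan_graph_triangle_free).
rewrite (_ : 4 = 2 * 2) // -mulnA leq_mul2l /= big_distrr /= -card_pairs.
under eq_bigr do rewrite -card_fan.
exact: sum_card_fan_le.
Qed.

Lemma nedges_le_quarter : nedges E <= #|V| + #|W| ^ 2 %/ 4.
Proof.
apply: leq_trans (_ : #|V| + \sum_x #|[set y | E x y]|.-1 <= _); last first.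
  by rewrite leq_add2l leq_divRL // mulnC sum_deg_pred_le.
rewrite /nedges card_pairs -sum1_card -big_split /=.
by apply: leq_sum => x _; case: #|_|.
Qed.

End FanGraph.

Section Subgraph.
Variables (V W : finType) (E : V -> W -> bool).

Definition edges_in (A : {set V}) (B : {set W}) : {set V * W} :=
  setX A B :&: [set p | E p.1 p.2].
Definition degV (B : {set W}) x := #|[set y in B | E x y]|.
Definition degW (A : {set V}) y := #|[set x in A | E x y]|.

Variables (A : {set V}) (B : {set W}).

Lemma big_edges_in (R : Type) (idx : R) (op : Monoid.com_law idx) (F : V * W -> R) :
  \big[op/idx]_(m in edges_in A B) F m =
    \big[op/idx]_(x in A) \big[op/idx]_(y in B | E x y) F (x, y).
Proof. by rewrite pair_big_dep; apply: eq_big => -[x y] //=; rewrite !inE andbA. Qed.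

Lemma big_edges_in_sym (R : Type) (idx : R) (op : Monoid.com_law idx) (F : V * W -> R) :
  \big[op/idx]_(m in edges_in A B) F m =
    \big[op/idx]_(y in B) \big[op/idx]_(x in A | E x y) F (x, y).
Proof.
rewrite big_edges_in (exchange_big_dep (fun y => y \in B)) => [|x y _ /andP[]//].
by apply: eq_bigr => y yB; apply: eq_bigl => x; rewrite yB.
Qed.

Lemma card_edges_in : #|edges_in A B| = \sum_(x in A) degV B x.
Proof. by rewrite -sum1_card big_edges_in; apply: eq_bigr => x _; rewrite sum1dep_card. Qed.

Lemma card_edges_in_sym : #|edges_in A B| = \sum_(y in B) degW A y.
Proof.
by rewrite -sum1_card big_edges_in_sym; apply: eq_bigr => y _; rewrite sum1dep_card.
Qed.

Lemma card_edges_in_le : #|edges_in A B| <= #|A| * #|B|.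
Proof. by rewrite -cardsX subset_leq_card // subsetIl. Qed.

Local Open Scope ring_scope.

Lemma sum_edges_fst (R : pzSemiRingType) (g : V -> R) :
  \sum_(m in edges_in A B) g m.1 = \sum_(x in A) (degV B x)%:R * g x.
Proof.
rewrite big_edges_in; apply: eq_bigr => x _.
by rewrite (eq_bigl (mem [set y in B | E x y])) /= ?sumr_const ?mulr_natl // => y; rewrite !inE.
Qed.

Lemma sum_edges_snd (R : pzSemiRingType) (g : W -> R) :
  \sum_(m in edges_in A B) g m.2 = \sum_(y in B) (degW A y)%:R * g y.
Proof.
rewrite big_edges_in_sym; apply: eq_bigr => y _.
by rewrite (eq_bigl (mem [set x in A | E x y])) /= ?sumr_const ?mulr_natl // => x; rewrite !inE.
Qed.

End Subgraph.

Section ThreePaths.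
Variables (V W : finType) (E : V -> W -> bool).
Hypotheses (nC4 : ~ has_C4 E) (nC6 : ~ has_C6 E).
Variables (A : {set V}) (B : {set W}).

(* The path e0.1 - m.2 - m.1 - e0.2 in the subgraph induced by A and B. *)
Definition path3 (e0 m : V * W) :=
  [&& e0 \in setX A B, m \in edges_in E A B, E e0.1 m.2, E m.1 e0.2,
      e0.1 != m.1 & e0.2 != m.2].

Lemma card_path3_mid m : m \in edges_in E A B ->
  #|[set e0 | path3 e0 m]| = (degW E A m.2).-1 * (degV E B m.1).-1.
Proof.
case: m => x1 y1 m_edge.
have [x1A y1B e11] : [/\ x1 \in A, y1 \in B & E x1 y1].
  by move: m_edge; rewrite !inE => /andP[/andP[-> ->] ->].
have -> : [set e0 | path3 e0 (x1, y1)] =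
    setX ([set x in A | E x y1] :\ x1) ([set y in B | E x1 y] :\ y1).
  apply/setP => -[x y]; rewrite !inE /path3 m_edge !inE /=.
  by case: (x \in A); case: (y \in B); case: (E x y1); case: (E x1 y);
     case: (x != x1); case: (y != y1).
by rewrite cardsX /degW /degV [in RHS](cardsD1 x1) [in RHS](cardsD1 y1) !inE x1A y1B e11.
Qed.

Lemma path3_nonedge e0 m : path3 e0 m -> e0 \in setX A B :\: [set p | E p.1 p.2].
Proof.
case: e0 m => [x y] [x1 y1] /and5P[/= e0AB m_edge xy1 x1y /andP[xx1 yy1]].
rewrite in_setD e0AB andbT inE /=; apply/negP => xy.
move: m_edge; rewrite !inE => /andP[_ e11].
by case/negP: yy1; rewrite (C4_free_eqW nC4 xx1 xy x1y xy1 e11).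
Qed.

Lemma path3_le1 e0 : #|[set m | path3 e0 m]| <= 1.
Proof.
apply/card_le1_eqP => -[x1 y1] [x2 y2]; rewrite !inE; case: e0 => x y; rewrite /path3 /=.
move=> /and5P[_ m1 xy1 x1y /andP[xx1 yy1]] /and5P[_ m2 xy2 x2y /andP[xx2 yy2]].
move: m1 m2; rewrite !inE /= => /andP[_ e11] /andP[_ e22].
have [ey|ny] := eqVneq y1 y2.
  by subst y2; rewrite (C4_free_eqV nC4 yy1 x1y x2y e11 e22).
have [ex|nx] := eqVneq x1 x2.
  by subst x2; rewrite (C4_free_eqW nC4 xx1 xy1 e11 xy2 e22).
case: nC6; exists x, x1, x2, y1, y, y2; split; rewrite /= ?inE ?negb_or.
- by rewrite xx1 xx2 nx.
- by rewrite eq_sym yy1 ny yy2.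
- by rewrite xy1 e11 x1y x2y e22 xy2.
Qed.

Lemma edges_add_paths_le :
  #|edges_in E A B| + \sum_(m in edges_in E A B) (degV E B m.1).-1 * (degW E A m.2).-1
    <= #|A| * #|B|.
Proof.
have -> : \sum_(m in edges_in E A B) (degV E B m.1).-1 * (degW E A m.2).-1 =
    \sum_m #|[set e0 | path3 e0 m]|.
  rewrite [RHS](bigID (mem (edges_in E A B))) /= [X in _ + X]big1 ?addn0 => [|m mE].
    by apply: eq_bigr => m mE; rewrite card_path3_mid // mulnC.
  by apply: eq_card0 => e0; rewrite inE /path3 (negbTE mE) andbF.
rewrite sum_card_exchange -cardsX -(cardsID [set p | E p.1 p.2] (setX A B)) leq_add2l.
rewrite -sum1_card (bigID (mem (setX A B :\: [set p | E p.1 p.2]))) /=.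
rewrite [X in _ + X]big1 ?addn0 => [|e0 e0N]; first by apply: leq_sum => e0 _; apply: path3_le1.
by apply: eq_card0 => m; rewrite inE; apply/negP => /path3_nonedge; apply/negP.
Qed.

End ThreePaths.

Section LogBounds.
Variable R : realType.
Local Open Scope classical_set_scope.
Local Open Scope ring_scope.

Lemma is_derive_ge0_ler (f df : R -> R) :
  (forall x : R, is_derive x 1 f (df x)) -> (forall x, 0 <= x -> 0 <= df x) ->
  forall s, 0 <= s -> f 0 <= f s.
Proof.
move=> fd df_ge0 s s_ge0.
have cf : {within `[0, s], continuous f}.
  by apply: derivable_within_continuous => x _; have := fd x => /(@ex_derive _ _ _ _ _ _ _).
have [c] := MVT_segment s_ge0 (fun x _ => fd x) cf.
rewrite in_itv /= => /andP[c_ge0 _] fsE.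
by rewrite -subr_ge0 fsE subr0 mulr_ge0 ?df_ge0.
Qed.

Lemma ln_ge1_lbound (u : R) : 1 <= u -> 2 * (u - 1) <= (u + 1) * ln u.
Proof.
move=> u_ge1; have u_gt0 : 0 < u by lra.
pose chi (s : R) := s * expR s + s - 2 * expR s + 2.
have chi_der (x : R) : is_derive x 1 chi (x * expR x - expR x + 1).
  by apply: is_derive_eq; rewrite /GRing.scale /= mulr1; lra.
have chi_ge0 : chi 0 <= chi (ln u).
  apply: is_derive_ge0_ler chi_der _ _ (ln_ge0 u_ge1) => x x_ge0.
  have := expR_ge1Dx (- x); have := expRxMexpNx_1 x; have := expR_gt0 x; nra.
by move: chi_ge0; rewrite /chi lnK ?posrE // expR0; lra.
Qed.

Lemma ln_le1_lbound (u : R) : 0 < u -> u <= 1 -> u ^+ 2 - 1 <= 2 * u * ln u.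
Proof.
move=> u_gt0 u_le1.
pose rho (s : R) := expR s * expR s - 1 - 2 * s * expR s.
have rho_der (x : R) : is_derive x 1 rho (2 * expR x * (expR x - 1 - x)).
  by apply: is_derive_eq; rewrite /GRing.scale /= !mulr1; lra.
have rho_ge0 : rho 0 <= rho (ln u^-1).
  apply: is_derive_ge0_ler rho_der _ _ _ => [x _|].
    by have := expR_ge1Dx x; have := expR_gt0 x; nra.
  by rewrite ln_ge0 // invf_ge1.
move: rho_ge0; rewrite /rho lnK ?posrE ?invr_gt0 // expR0 lnV ?posrE //.
have uV : u * u^-1 = 1 by rewrite divff ?gt_eqF.
nra.
Qed.

(* The tangent line at t = c + 1 to the convex function t |-> t ln (t - 1),
   written in the variable u = (t - 1) / c. *)
Lemma ln_tangent_lbound (c u : R) :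
  1 <= c -> 1 <= c * u -> (c + 1) * (u - 1) <= (1 + c * u) * ln u.
Proof.
move=> c_ge1 cu_ge1; have u_gt0 : 0 < u by nra.
have cu1_ge0 : 0 <= 1 + c * u by lra.
have [u_ge1|u_lt1] := lerP 1 u.
  rewrite -(ler_pM2r (_ : 0 < u + 1)); last by lra.
  have := ler_wpM2l cu1_ge0 (ln_ge1_lbound u_ge1).
  have : 0 <= (c - 1) * (u - 1) ^+ 2 by rewrite mulr_ge0 ?sqr_ge0 ?subr_ge0.
  nra.
rewrite -(ler_pM2r (_ : 0 < 2 * u)); last by lra.
have := ler_wpM2l cu1_ge0 (ln_le1_lbound u_gt0 (ltW u_lt1)).
have : 0 <= (c * u - 1) * (u - 1) ^+ 2 by rewrite mulr_ge0 ?sqr_ge0 ?subr_ge0.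
nra.
Qed.

Lemma sum_ln_le_ln_mean (I : finType) (P : {pred I}) (p : I -> R) :
  {in P, forall i, 0 < p i} ->
  \sum_(i in P) ln (p i) <= #|P|%:R * ln ((\sum_(i in P) p i) / #|P|%:R).
Proof.
move=> p_gt0; have [n0|/card_gt0P[i0 i0P]] := posnP #|P|.
  by rewrite n0 mul0r big_pred0 // => i; rewrite (card0_eq n0).
set n := #|P|%:R; set S := \sum_(i in P) p i; set M := S / n.
have n_gt0 : 0 < n by rewrite ltr0n; apply/card_gt0P; exists i0.
have S_gt0 : 0 < S.
  rewrite /S (bigD1 i0) //=.
  have := p_gt0 _ i0P; have : 0 <= \sum_(i in P | i != i0) p i.
    by apply: sumr_ge0 => i /andP[iP _]; apply/ltW/p_gt0.
  lra.
have M_gt0 : 0 < M by rewrite divr_gt0.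
have ln_le i : i \in P -> ln (p i) <= ln M + (p i / M - 1).
  move=> iP; have piM_gt0 : 0 < p i / M by rewrite divr_gt0 ?p_gt0.
  have := @le_ln1Dx R (p i / M - 1); rewrite [1 + _]addrC subrK ln_div ?posrE ?p_gt0 //.
  by move/(_ _); lra.
apply: le_trans (ler_sum _ ln_le) _.
rewrite big_split /= sumrB !sumr_const -mulr_suml -/S -/n -mulr_natl -/n.
by rewrite /M invf_div mulrCA divff ?gt_eqF // mulr1 subrr addr0.
Qed.

Lemma jensen_mul_ln_subr1 (I : finType) (P : {pred I}) (t : I -> R) :
  (0 < #|P|)%N -> {in P, forall i, 2 <= t i} ->
  (\sum_(i in P) t i) * ln ((\sum_(i in P) t i) / #|P|%:R - 1)
    <= \sum_(i in P) t i * ln (t i - 1).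
Proof.
move=> P_gt0 t_ge2; set S := \sum_(i in P) t i; set n := #|P|%:R.
have n_gt0 : 0 < n by rewrite ltr0n.
have S_ge : 2 * n <= S.
  by rewrite /S /n -sum1_card natr_sum mulr_sumr; apply: ler_sum => i /t_ge2; rewrite mulr1.
set a := S / n; have Sa : S = a * n by rewrite /a divfK ?gt_eqF.
clearbody a; have a_ge2 : 2 <= a by rewrite -(ler_pM2r n_gt0) -Sa.
have tangent i : i \in P -> a / (a - 1) * (t i - a) <= t i * ln (t i - 1) - t i * ln (a - 1).
  move=> /t_ge2 ti_ge2.
  have cu : (a - 1) * ((t i - 1) / (a - 1)) = t i - 1.
    by rewrite mulrCA divff ?mulr1 ?gt_eqF //; lra.
  have := @ln_tangent_lbound (a - 1) ((t i - 1) / (a - 1)).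
  rewrite cu -mulrBr -ln_div ?posrE; [|lra|lra].
  have -> : (a - 1 + 1) * ((t i - 1) / (a - 1) - 1) = a / (a - 1) * (t i - a).
    by field; lra.
  have -> : 1 + (t i - 1) = t i by ring.
  by apply; lra.
rewrite -subr_ge0 mulr_suml -sumrB; apply: le_trans (ler_sum _ tangent).
rewrite -mulr_sumr sumrB sumr_const -/S -mulr_natl -/n Sa.
by rewrite [n * a]mulrC subrr mulr0.
Qed.

End LogBounds.

Section DegreeJensen.
Variables (R : realType) (V W : finType) (E : V -> W -> bool) (A : {set V}) (B : {set W}).
Hypotheses (degV_ge2 : {in A, forall x, 2 <= degV E B x}%N)
           (degW_ge2 : {in B, forall y, 2 <= degW E A y}%N).
Local Open Scope ring_scope.

Let e : R := #|edges_in E A B|%:R.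

Lemma jensen_edges_fst : (0 < #|A|)%N ->
  e * ln (e / #|A|%:R - 1) <= \sum_(m in edges_in E A B) ln ((degV E B m.1)%:R - 1).
Proof.
move=> A_gt0; rewrite (sum_edges_fst E A B (fun x => ln ((degV E B x)%:R - 1 : R))).
rewrite /e card_edges_in natr_sum.
by apply: jensen_mul_ln_subr1 => // x /degV_ge2; rewrite (ler_nat R 2).
Qed.

Lemma jensen_edges_snd : (0 < #|B|)%N ->
  e * ln (e / #|B|%:R - 1) <= \sum_(m in edges_in E A B) ln ((degW E A m.2)%:R - 1).
Proof.
move=> B_gt0; rewrite (sum_edges_snd E A B (fun y => ln ((degW E A y)%:R - 1 : R))).
rewrite /e card_edges_in_sym natr_sum.
by apply: jensen_mul_ln_subr1 => // y /degW_ge2; rewrite (ler_nat R 2).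
Qed.

Lemma mean_degV_gt1 : (0 < #|A|)%N -> 1 < e / #|A|%:R.
Proof.
move=> A_gt0; have nA_gt0 : 0 < #|A|%:R :> R by rewrite ltr0n.
rewrite ltr_pdivlMr // mul1r (lt_le_trans (_ : _ < 2 * #|A|%:R)) //; first by lra.
rewrite /e card_edges_in natr_sum -sum1_card natr_sum mulr_sumr.
by apply: ler_sum => x /degV_ge2; rewrite mulr1 (ler_nat R 2).
Qed.

Lemma mean_degW_gt1 : (0 < #|B|)%N -> 1 < e / #|B|%:R.
Proof.
move=> B_gt0; have nB_gt0 : 0 < #|B|%:R :> R by rewrite ltr0n.
rewrite ltr_pdivlMr // mul1r (lt_le_trans (_ : _ < 2 * #|B|%:R)) //; first by lra.
rewrite /e card_edges_in_sym natr_sum -sum1_card natr_sum mulr_sumr.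
by apply: ler_sum => y /degW_ge2; rewrite mulr1 (ler_nat R 2).
Qed.

Let paths : R :=
  \sum_(m in edges_in E A B) ((degV E B m.1)%:R - 1) * ((degW E A m.2)%:R - 1).

Lemma edges_cubic_le_paths :
  e * (e - #|A|%:R) * (e - #|B|%:R) <= #|A|%:R * #|B|%:R * paths.
Proof.
have d1_ge1 m : m \in edges_in E A B -> 1 <= (degV E B m.1)%:R - 1 :> R.
  by rewrite !inE => /andP[/andP[/degV_ge2 + _] _]; rewrite -(ler_nat R) => ?; lra.
have d2_ge1 m : m \in edges_in E A B -> 1 <= (degW E A m.2)%:R - 1 :> R.
  by rewrite !inE => /andP[/andP[_ /degW_ge2 + ] _]; rewrite -(ler_nat R) => ?; lra.
have e_le_paths : e <= paths.
  rewrite /e -sum1_card natr_sum; apply: ler_sum => m mE.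
  by have := d1_ge1 m mE; have := d2_ge1 m mE; nra.
have [E0|/card_gt0P[m0 m0E]] := posnP #|edges_in E A B|.
  by rewrite /e E0 !mul0r mulr_ge0 ?mulr_ge0 ?ler0n // (le_trans _ e_le_paths) // /e E0.
have [A_gt0 B_gt0] : (0 < #|A|)%N /\ (0 < #|B|)%N.
  move: m0E; rewrite !inE => /andP[/andP[m1A m2B] _].
  by split; apply/card_gt0P; [exists m0.1 | exists m0.2].
have e_gt0 : 0 < e by rewrite /e ltr0n; apply/card_gt0P; exists m0.
set nA : R := #|A|%:R; set nB : R := #|B|%:R.
have nA_gt0 : 0 < nA by rewrite ltr0n.
have nB_gt0 : 0 < nB by rewrite ltr0n.
have a_gt1 := mean_degV_gt1 A_gt0; have b_gt1 := mean_degW_gt1 B_gt0.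
have key : e * (ln (e / nA - 1) + ln (e / nB - 1)) <= e * ln (paths / e).
  rewrite mulrDr; apply: le_trans (lerD (jensen_edges_fst A_gt0) (jensen_edges_snd B_gt0)) _.
  rewrite -big_split /=.
  under eq_bigr => m mE do rewrite -lnM ?posrE ?(lt_le_trans ltr01) ?d1_ge1 ?d2_ge1 //.
  apply: sum_ln_le_ln_mean => m mE; have := d1_ge1 m mE; have := d2_ge1 m mE; nra.
have paths_gt0 : 0 < paths := lt_le_trans e_gt0 e_le_paths.
rewrite ler_pM2l // -lnM ?posrE ?subr_gt0 // in key.
rewrite ler_ln ?posrE ?mulr_gt0 ?subr_gt0 ?invr_gt0 // ler_pdivlMr // in key.
have -> : e * (e - nA) * (e - nB) = nA * nB * ((e / nA - 1) * (e / nB - 1) * e).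
  by field; rewrite !gt_eqF.
by rewrite ler_pM2l ?mulr_gt0.
Qed.

End DegreeJensen.

Local Open Scope ring_scope.

(* Part (i) of the theorem states [0 <= defect e v w]. *)
Definition defect (R : pzRingType) (e v w : R) : R :=
  v * w * (v * w - e) - e * (e - v) * (e - w).

Lemma defect_sym (R : comPzRingType) (e v w : R) : defect e v w = defect e w v.
Proof. by rewrite /defect; ring. Qed.

Lemma defect_ge0_small (e v w : int) :
  0 <= e -> e <= v * w -> (e <= v) || (e <= w) -> 0 <= defect e v w.
Proof.
move=> e_ge0 e_le_vw e_small.
have vw_term : 0 <= v * w * (v * w - e) by rewrite mulr_ge0 ?subr_ge0 ?(le_trans e_ge0).
have [e_le_v|v_lt_e] := lerP e v; have [e_le_w|w_lt_e] := lerP e w.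
- have -> : defect e v w = (v * w - e) ^+ 2 + e ^+ 2 * (v + w - 1 - e) by rewrite /defect; ring.
  have [->|e_gt0] := eqVneq e 0; first by rewrite expr0n mul0r addr0 sqr_ge0.
  by rewrite addr_ge0 ?sqr_ge0 // mulr_ge0 ?sqr_ge0 //; lia.
- by rewrite /defect subr_ge0 (le_trans _ vw_term) // -mulrA mulr_ge0_le0 //; nia.
- by rewrite /defect subr_ge0 (le_trans _ vw_term) // -mulrA mulr_ge0_le0 //; nia.
- by rewrite leNgt v_lt_e leNgt w_lt_e in e_small.
Qed.

Lemma defect_ge0_isolated (e v w : int) :
  1 <= v -> 0 <= defect e (v - 1) w -> 0 <= defect e v w.
Proof.
move=> v_ge1 D_ge0.
have -> : defect e v w = defect e (v - 1) w + ((e - w) ^+ 2 + w ^+ 2 * (2 * v - 2)).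
  by rewrite /defect; ring.
apply: addr_ge0 D_ge0 _; rewrite addr_ge0 ?sqr_ge0 // mulr_ge0 ?sqr_ge0 //; lia.
Qed.

Lemma defect_ge0_pendant (e v w : int) :
  1 <= e -> e <= v * w -> 1 <= v -> 0 <= w ->
  0 <= defect (e - 1) (v - 1) w -> 0 <= defect e v w.
Proof.
move=> e_ge1 e_le_vw v_ge1 w_ge0 D_ge0.
have [e_small|] := boolP ((e <= v) || (e <= w)); first by apply: defect_ge0_small; lia.
rewrite negb_or -!ltNge => /andP[v_lt_e w_lt_e].
have v_gt1 : 1 < v by nia.
set k := e - v.
rewrite -(pmulr_rge0 _ (_ : 0 < v - 1)) ?subr_gt0 //.
have -> : (v - 1) * defect e v w = (v + 1) * defect (e - 1) (v - 1) w
    + (2 * k ^+ 2 * (e - 1 - w) + (v - 1) * (w ^+ 2 - w - k)).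
  by rewrite /defect /k; ring.
apply: addr_ge0; first by rewrite mulr_ge0 //; lia.
have [k_le|k_gt] := lerP k (w ^+ 2 - w).
  by rewrite addr_ge0 ?mulr_ge0 ?sqr_ge0 //; lia.
have k_ge_w : w <= k by nia.
have : k * (v - 1) <= 2 * k ^+ 2 * (e - 1 - w) by nia.
have : 0 <= (v - 1) * (w ^+ 2 - w) by nia.
nia.
Qed.

Lemma defect_ge0_remove (d e v w : nat) : (d <= 1)%N -> (d + e <= v.+1 * w)%N ->
  0 <= defect e%:Z v%:Z w%:Z -> 0 <= defect (d + e)%:Z v.+1%:Z w%:Z.
Proof.
move=> d_le1 e_le D_ge0; have vE : v.+1%:Z - 1 = v by lia.
case: d d_le1 e_le => [|[|//]] _ e_le.
  by apply: defect_ge0_isolated; rewrite ?vE //; lia.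
have eE : (1 + e)%:Z - 1 = e by lia.
by apply: defect_ge0_pendant; rewrite ?vE ?eE //; lia.
Qed.

Lemma defect_ge0_mindeg2 (V W : finType) (E : V -> W -> bool) (A : {set V}) (B : {set W}) :
  ~ has_C4 E -> ~ has_C6 E ->
  {in A, forall x, 2 <= degV E B x}%N -> {in B, forall y, 2 <= degW E A y}%N ->
  0 <= defect #|edges_in E A B|%:Z #|A|%:Z #|B|%:Z.
Proof.
move=> nC4 nC6 degV_ge2 degW_ge2.
have := edges_cubic_le_paths Rdefinitions.R degV_ge2 degW_ge2.
have := edges_add_paths_le nC4 nC6 A B.
rewrite -(ler_nat Rdefinitions.R) natrD natrM natr_sum.
rewrite (eq_bigr (fun m => ((degV E B m.1)%:R - 1) * ((degW E A m.2)%:R - 1))); last first.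
  move=> m; rewrite !inE => /andP[/andP[/degV_ge2 d1 /degW_ge2 d2] _].
  by rewrite natrM -!subn1 !natrB // ltnW.
rewrite -(ler0z Rdefinitions.R) /defect !(rmorphB, rmorphM) /= -!pmulrn.
set e : Rdefinitions.R := #|edges_in E A B|%:R; set v : Rdefinitions.R := #|A|%:R.
set w : Rdefinitions.R := #|B|%:R; set P := \sum_(i in edges_in E A B) _.
move=> count cubic; apply: le_trans (_ : 0 <= v * w * (v * w - e - P)) _.
  by rewrite !mulr_ge0 ?ler0n //; lra.
lra.
Qed.

Lemma defect_ge0_in (V W : finType) (E : V -> W -> bool) (A : {set V}) (B : {set W}) :
  ~ has_C4 E -> ~ has_C6 E -> 0 <= defect #|edges_in E A B|%:Z #|A|%:Z #|B|%:Z.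
Proof.
move=> nC4 nC6; have [n] := ubnP (#|A| + #|B|)%N; elim: n A B => // n IH A B AB_lt.
have e_le := card_edges_in_le E A B.
have [x /andP[xA dx_le1] | degV_ge2] := pickP (fun x => (x \in A) && (degV E B x <= 1)%N).
  have eA : #|edges_in E A B| = (degV E B x + #|edges_in E (A :\ x) B|)%N.
    by rewrite !card_edges_in (big_setD1 x xA).
  have cA : #|A| = #|A :\ x|.+1 by rewrite (cardsD1 x A) xA.
  rewrite eA cA in e_le *; apply: defect_ge0_remove => //; apply: IH; lia.
have [y /andP[yB dy_le1] | degW_ge2] := pickP (fun y => (y \in B) && (degW E A y <= 1)%N).
  have eB : #|edges_in E A B| = (degW E A y + #|edges_in E A (B :\ y)|)%N.
    by rewrite !card_edges_in_sym (big_setD1 y yB).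
  have cB : #|B| = #|B :\ y|.+1 by rewrite (cardsD1 y B) yB.
  rewrite eB cB in e_le *; rewrite mulnC in e_le.
  rewrite defect_sym; apply: defect_ge0_remove => //.
  by rewrite defect_sym; apply: IH; lia.
apply: defect_ge0_mindeg2 => // [x xA | y yB].
  by have := degV_ge2 x; rewrite xA /= ltnNge => ->.
by have := degW_ge2 y; rewrite yB /= ltnNge => ->.
Qed.

Theorem theorem1p1 (V W : finType) (E : V -> W -> bool) :
  ~ has_C4 E -> ~ has_C6 E ->
  let v := #|V| in let w := #|W| in let e := nedges E in
  ((e%:Z ^+ 3 - (v%:Z + w%:Z) * e%:Z ^+ 2 + 2 * v%:Z * w%:Z * e%:Z
      - v%:Z ^+ 2 * w%:Z ^+ 2 <= 0)%R)
  /\ (w ^ 2 %/ 4 <= v -> e <= v + w ^ 2 %/ 4)%N.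
Proof.
move=> nC4 nC6 v w e; split; last first.
  (* (ii) holds without the hypothesis [w ^ 2 %/ 4 <= v]. *)
  by move=> _; apply: nedges_le_quarter.
have := defect_ge0_in [set: V] [set: W] nC4 nC6.
have -> : #|edges_in E [set: V] [set: W]| = e by apply: eq_card => p; rewrite !inE.
rewrite !cardsT -/v -/w -oppr_ge0 => /le_trans; apply.
by rewrite /defect le_eqVlt; apply/orP; left; apply/eqP; ring.
Qed.
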